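(* Let $(\Omega(\mathcal{A}),d)$ be a differential calculus on a complex algebra $\mathcal{A}$ with $\mathcal{E}=\Omega^1(\mathcal{A})$ a finitely generated projective right $\mathcal{A}$-module satisfying: (1) $\mathcal{E}=\mathcal{Z}(\mathcal{E})\otimes_{\mathcal{Z}(\mathcal{A})}\mathcal{A}$; (2) $\mathcal{E}\otimes_{\mathcal{A}}\mathcal{E}=\ker(\wedge)\oplus\mathcal{F}$ with $\mathcal{F}$ a right submodule and $Q=\wedge|_{\mathcal{F}}:\mathcal{F}\to\Omega^2(\mathcal{A})$ a right $\mathcal{A}$-linear isomorphism; (3) $\sigma(\omega\otimes_{\mathcal{A}}\eta)=\eta\otimes_{\mathcal{A}}\omega$ for all $\omega,\eta\in\mathcal{Z}(\mathcal{E})$. Then: (a) the map $\sigma$, and hence $P_{\rm sym}$, is $\mathcal{A}$-$\mathcal{A}$-bilinear; (b) the map $Q:\mathcal{F}\to\Omega^2(\mathcal{A})$ is an $\mathcal{A}$-$\mathcal{A}$-bilinear isomorphism.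
   Context: A differential calculus: $\Omega(\mathcal{A})=\oplus_{j\ge0}\Omega^j(\mathcal{A})$, $\Omega^0=\mathcal{A}$, bimodules $\Omega^j$, an $\mathcal{A}$-bimodule product $\wedge$ adding degrees, $d$ of degree one with $d^2=0$ and the graded Leibniz rule, $\Omega^j$ right-spanned by $da_0\wedge\cdots\wedge da_{j-1}$. $\wedge:\mathcal{E}\otimes_{\mathcal{A}}\mathcal{E}\to\Omega^2(\mathcal{A})$ is the induced product. $P_{\rm sym}$ is the idempotent on $\mathcal{E}\otimes_{\mathcal{A}}\mathcal{E}$ with image $\ker\wedge$ and kernel $\mathcal{F}$, and $\sigma=2P_{\rm sym}-1$. For a bimodule $\mathcal{M}$, $\mathcal{Z}(\mathcal{M})=\{m:am=ma\ \forall a\in\mathcal{A}\}$; $\mathcal{Z}(\mathcal{A})$ is the center of $\mathcal{A}$. Condition (1) means the multiplication map $\mathcal{Z}(\mathcal{E})\otimes_{\mathcal{Z}(\mathcal{A})}\mathcal{A}\to\mathcal{E}$ is an isomorphism. *)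

From mathcomp Require Import all_boot all_algebra.
From mathcomp Require Import complex.
From mathcomp Require Import reals.

Set Implicit Arguments.
Unset Strict Implicit.
Unset Printing Implicit Defensive.
Import GRing.Theory.
Local Open Scope ring_scope.

Definition additive_map (M N : zmodType) (f : M -> N) : Prop :=
  forall x y, f (x + y) = f x + f y.

Definition is_bimodule (A : nzRingType) (M : zmodType)
    (l : A -> M -> M) (r : M -> A -> M) : Prop :=
  (forall a x y, l a (x + y) = l a x + l a y) /\
  (forall a b x, l (a + b) x = l a x + l b x) /\
  (forall a b x, l (a * b) x = l a (l b x)) /\
  (forall x, l 1 x = x) /\
  (forall a x y, r (x + y) a = r x a + r y a) /\
  (forall a b x, r x (a + b) = r x a + r x b) /\
  (forall a b x, r x (a * b) = r (r x a) b) /\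
  (forall x, r x 1 = x) /\
  (forall a b x, l a (r x b) = r (l a x) b).

(* M (a right A-module) is finitely generated projective: a direct summand
   (via right A-linear maps iota, pi with pi \o iota = id) of the free right
   module A^n = ('I_n -> A) for some n *)
Definition fg_projective_right (A : nzRingType) (M : zmodType)
    (r : M -> A -> M) : Prop :=
  exists (n : nat) (iota : M -> 'I_n -> A) (pi : ('I_n -> A) -> M),
    (forall x y i, iota (x + y) i = iota x i + iota y i) /\
    (forall x a i, iota (r x a) i = iota x i * a) /\
    (forall u v, pi (fun i => u i + v i) = pi u + pi v) /\
    (forall u a, pi (fun i => u i * a) = r (pi u) a) /\
    (forall x, pi (iota x) = x).

Definition central_elt (A : nzRingType) (M : zmodType)
    (l : A -> M -> M) (r : M -> A -> M) (x : M) : Prop :=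
  forall a, l a x = r x a.

Definition central_alg (A : nzRingType) (c : A) : Prop :=
  forall a, a * c = c * a.

Definition balanced_biadditive (A : nzRingType) (S : A -> Prop)
    (M1 M2 N : zmodType) (D1 : M1 -> Prop)
    (r1 : M1 -> A -> M1) (l2 : A -> M2 -> M2) (f : M1 -> M2 -> N) : Prop :=
  (forall x y y', D1 x -> f x (y + y') = f x y + f x y') /\
  (forall x x' y, D1 x -> D1 x' -> f (x + x') y = f x y + f x' y) /\
  (forall x s y, D1 x -> S s -> f (r1 x s) y = f x (l2 s y)).

(* (T, tens) is the tensor product over the scalars S of the right S-module
   D1 (a subset of M1) with the left S-module M2: tens is balanced
   biadditive, T is generated by the pure tensors, and every balanced
   biadditive map factors through an additive map on T (the factorisation
   is unique because T is generated by pure tensors). *)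
Definition is_tensor_product (A : nzRingType) (S : A -> Prop)
    (M1 M2 T : zmodType) (D1 : M1 -> Prop)
    (r1 : M1 -> A -> M1) (l2 : A -> M2 -> M2) (tens : M1 -> M2 -> T) : Prop :=
  balanced_biadditive S D1 r1 l2 tens /\
  (forall t : T, exists s : seq (M1 * M2),
      (forall p, p \in s -> D1 p.1) /\ t = \sum_(p <- s) tens p.1 p.2) /\
  (forall (N : zmodType) (f : M1 -> M2 -> N),
      balanced_biadditive S D1 r1 l2 f ->
      exists g : T -> N, additive_map g /\
         forall x y, D1 x -> g (tens x y) = f x y).

(* A differential calculus on the complex algebra A, truncated to degrees
   <= 2 (the statement only involves Omega^0 = A, Omega^1 = E,
   Omega^2 = W): d0 : A -> E, d1 : E -> W, wedge : E x E -> W. *)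
Definition diff_calculus_le2 (R : realType) (A : algType R[i])
    (E W : zmodType)
    (lE : A -> E -> E) (rE : E -> A -> E)
    (lW : A -> W -> W) (rW : W -> A -> W)
    (d0 : A -> E) (d1 : E -> W) (wedge : E -> E -> W) : Prop :=
  is_bimodule lE rE /\ is_bimodule lW rW /\
  (forall a b, d0 (a + b) = d0 a + d0 b) /\
  (forall (c : R[i]) a, d0 (c *: a) = lE (c%:A) (d0 a)) /\
  (forall w v, d1 (w + v) = d1 w + d1 v) /\
  (forall (c : R[i]) w, d1 (lE (c%:A) w) = lW (c%:A) (d1 w)) /\
  (forall a, d1 (d0 a) = 0) /\
  (forall a b, d0 (a * b) = rE (d0 a) b + lE a (d0 b)) /\
  (forall a w, d1 (lE a w) = wedge (d0 a) w + lW a (d1 w)) /\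
  (forall w a, d1 (rE w a) = rW (d1 w) a - wedge w (d0 a)) /\
  (forall w w' v, wedge (w + w') v = wedge w v + wedge w' v) /\
  (forall w v v', wedge w (v + v') = wedge w v + wedge w v') /\
  (forall w a v, wedge (rE w a) v = wedge w (lE a v)) /\
  (forall a w v, lW a (wedge w v) = wedge (lE a w) v) /\
  (forall w v a, rW (wedge w v) a = wedge w (rE v a)) /\
  (forall w : E, exists s : seq (A * A),
      w = \sum_(p <- s) rE (d0 p.1) p.2) /\
  (forall w : W, exists s : seq (A * A * A),
      w = \sum_(p <- s) rW (wedge (d0 p.1.1) (d0 p.1.2)) p.2).

Definition sigma_of (T : zmodType) (Psym : T -> T) (t : T) : T :=
  Psym t *+ 2 - t.

From mathcomp Require Import all_boot all_algebra.
From mathcomp Require Import complex.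
From mathcomp Require Import reals.
Import GRing.Theory Num.Theory.
Local Open Scope ring_scope.

(* P_sym is the projection onto ker(wedge) along F, so it commutes with every
   additive map preserving both summands; as wedge is right A-linear, this
   makes P_sym and sigma = 2 P_sym - 1 additive and right linear.  By (1), the
   tensors (z (x) z') c with z, z' in Z(E) additively span E (x)_A E, and
   a (z (x) z') c = (z (x) z') (a c).  Hence sigma, which is right linear and
   swaps central tensors by (3), is also left linear, and so is
   P_sym = (sigma + 1) / 2.  Then F = ker P_sym is a sub-bimodule, and wedge,
   being left linear on all of E (x)_A E, restricts to a bilinear Q.
   Neither the projectivity of E nor the differential d plays a role. *)

Section AdditiveMap.
Context {M N : zmodType} {f : M -> N}.
Hypothesis f_additive : additive_map f.

Lemma additive_map0 : f 0 = 0.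
Proof.
by apply: (addrI (f 0)); rewrite -f_additive !addr0.
Qed.

Lemma additive_mapN x : f (- x) = - f x.
Proof.
by apply: (addrI (f x)); rewrite -f_additive !subrr additive_map0.
Qed.

Lemma additive_mapB x y : f (x - y) = f x - f y.
Proof. by rewrite f_additive additive_mapN. Qed.

Lemma additive_mapMn2 x : f (x *+ 2) = f x *+ 2.
Proof. by rewrite !mulr2n f_additive. Qed.

End AdditiveMap.

Lemma additive_map_comp {M N P : zmodType} {f : N -> P} {g : M -> N} :
  additive_map f -> additive_map g -> additive_map (f \o g).
Proof. by move=> fA gA x y /=; rewrite gA fA. Qed.

Section Bimodule.
Context {A : nzRingType} {M : zmodType} {l : A -> M -> M} {r : M -> A -> M}.
Hypothesis bimod : is_bimodule l r.

Lemma bimodule_left_additive a : additive_map (l a).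
Proof. by case: bimod => lD _ x y; apply: lD. Qed.

Lemma bimodule_right_additive a : additive_map (r^~ a).
Proof. by case: bimod => _ [_ [_ [_ [rD _]]]] x y; apply: rD. Qed.

End Bimodule.

Lemma bimodule_mulr2n_inj {K : numFieldType} {A : algType K} {M : zmodType}
    {l : A -> M -> M} {r : M -> A -> M} :
  is_bimodule l r -> forall x y : M, x *+ 2 = y *+ 2 -> x = y.
Proof.
case=> _ [_ [_ [_ [rD [rDr [_ [r1 _]]]]]]].
have halve (x : M) : x = r (x *+ 2) (2^-1 : K)%:A.
  rewrite mulr2n rD -rDr -scalerDl -mulr2n -[_ *+ 2]mulr_natr mulVf ?pnatr_eq0 //.
  by rewrite scale1r r1.
by move=> x y xy; rewrite [x]halve xy -halve.
Qed.

Section KernelProjection.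
Context {T W : zmodType} {wT : T -> W} {F : T -> Prop} {Psym : T -> T}.
Hypotheses (wT_additive : additive_map wT) (F0 : F 0)
  (F_sub : forall s t, F s -> F t -> F (s - t))
  (Psym_split : forall t, wT (Psym t) = 0 /\ F (t - Psym t))
  (kerF : forall t, wT t = 0 -> F t -> t = 0).

Lemma F_add s t : F s -> F t -> F (s + t).
Proof.
move=> Fs Ft; rewrite -[t]opprK -[- t]sub0r.
by apply: F_sub => //; apply: F_sub.
Qed.

Lemma Psym_unique t k : wT k = 0 -> F (t - k) -> Psym t = k.
Proof.
move=> wk0 Ftk; have [wP0 FtP] := Psym_split t.
apply/eqP; rewrite -subr_eq0; apply/eqP/kerF.
  by rewrite additive_mapB // wP0 wk0 subrr.
have -> : Psym t - k = (t - k) - (t - Psym t).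
  by rewrite opprB [RHS]addrC [RHS]addrA subrK.
exact: F_sub.
Qed.

Lemma Psym_eq0 t : F t -> Psym t = 0.
Proof.
by move=> Ft; apply: Psym_unique; [apply: additive_map0 | rewrite subr0].
Qed.

Lemma Psym_additive : additive_map Psym.
Proof.
move=> s t; have [ws Fs] := Psym_split s; have [wt Ft] := Psym_split t.
apply: Psym_unique; first by rewrite wT_additive ws wt addr0.
by rewrite opprD addrACA; apply: F_add.
Qed.

Lemma Psym_commute (f : T -> T) :
    additive_map f -> (forall t, wT t = 0 -> wT (f t) = 0) ->
    (forall t, F t -> F (f t)) ->
  forall t, Psym (f t) = f (Psym t).
Proof.
move=> fA f_ker fF t; have [wP FtP] := Psym_split t.
by apply: Psym_unique; [apply: f_ker | rewrite -additive_mapB //; apply: fF].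
Qed.

Lemma F_stable_of_Psym_commute (f : T -> T) :
    additive_map f -> (forall t, Psym (f t) = f (Psym t)) ->
  forall t, F t -> F (f t).
Proof.
move=> fA fP t Ft; have := (Psym_split (f t)).2.
by rewrite fP Psym_eq0 // additive_map0 // subr0.
Qed.

Local Notation sigma := (sigma_of Psym).

Lemma sigma_additive : additive_map sigma.
Proof.
by move=> s t; rewrite /sigma_of Psym_additive mulrnDl opprD addrACA.
Qed.

Lemma sigma_commute (f : T -> T) :
    additive_map f -> (forall t, Psym (f t) = f (Psym t)) ->
  forall t, sigma (f t) = f (sigma t).
Proof.
by move=> fA fP t; rewrite /sigma_of fP additive_mapB // additive_mapMn2.
Qed.

Lemma Psym_commute_of_sigma (f : T -> T) :
    (forall x y : T, x *+ 2 = y *+ 2 -> x = y) ->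
    additive_map f -> (forall t, sigma (f t) = f (sigma t)) ->
  forall t, Psym (f t) = f (Psym t).
Proof.
move=> mulr2n_inj fA fS t; apply: mulr2n_inj.
have Psym2 u : Psym u *+ 2 = sigma u + u by rewrite /sigma_of subrK.
by rewrite Psym2 fS -fA -Psym2 additive_mapMn2.
Qed.

End KernelProjection.

Lemma tensor_ind {A : nzRingType} {S : A -> Prop} {M1 M2 T : zmodType}
    {D1 : M1 -> Prop} {r1 : M1 -> A -> M1} {l2 : A -> M2 -> M2}
    {tens : M1 -> M2 -> T} :
    is_tensor_product S D1 r1 l2 tens -> forall P : T -> Prop,
    P 0 -> (forall u v, P u -> P v -> P (u + v)) ->
    (forall x y, D1 x -> P (tens x y)) ->
  forall t, P t.
Proof.
move=> [_ [span _]] P P0 PD Ptens t; have [s [Ds ->]] := span t.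
by rewrite big_seq; apply: big_ind => // p /Ds; apply: Ptens.
Qed.

Lemma tensor_additive_ext {A : nzRingType} {S : A -> Prop} {M1 M2 T N : zmodType}
    {D1 : M1 -> Prop} {r1 : M1 -> A -> M1} {l2 : A -> M2 -> M2}
    {tens : M1 -> M2 -> T} (f g : T -> N) :
    is_tensor_product S D1 r1 l2 tens ->
    additive_map f -> additive_map g ->
    (forall x y, D1 x -> f (tens x y) = g (tens x y)) ->
  f =1 g.
Proof.
move=> tensor fA gA; apply: (tensor_ind tensor (fun t => f t = g t)).
- by rewrite !additive_map0.
- by move=> u v fgu fgv; rewrite fA gA fgu fgv.
Qed.

Lemma central_right_span {A : nzRingType} {E TZ : zmodType}
    {lE : A -> E -> E} {rE : E -> A -> E} {tz : E -> A -> TZ} {mu : TZ -> E} :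
    is_tensor_product (@central_alg A) (central_elt lE rE) rE
      (fun a b : A => a * b) tz ->
    additive_map mu ->
    (forall z a, central_elt lE rE z -> mu (tz z a) = rE z a) ->
    (forall y, exists t, mu t = y) ->
  forall y, exists s : seq (E * A),
    (forall p, p \in s -> central_elt lE rE p.1) /\ y = \sum_(p <- s) rE p.1 p.2.
Proof.
move=> [_ [span _]] muA mu_tz mu_surj y; have [t <-] := mu_surj y.
have [s [Zs ->]] := span t; exists s; split=> //.
rewrite (big_morph mu muA (additive_map0 muA)) !big_seq.
by apply: eq_bigr => p /Zs; apply: mu_tz.
Qed.

Section CentralTensors.
Context {A : nzRingType} {E T : zmodType} {lE : A -> E -> E} {rE : E -> A -> E}
  {lT : A -> T -> T} {rT : T -> A -> T} {tens : E -> E -> T}.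
Hypotheses
  (tensor : is_tensor_product (fun _ : A => True) (fun _ : E => True) rE lE tens)
  (bimodT : is_bimodule lT rT)
  (lT_tens : forall a x y, lT a (tens x y) = tens (lE a x) y)
  (rT_tens : forall x y a, rT (tens x y) a = tens x (rE y a)).

Local Notation central := (central_elt lE rE).

Hypothesis central_span : forall y, exists s : seq (E * A),
  (forall p, p \in s -> central p.1) /\ y = \sum_(p <- s) rE p.1 p.2.

Lemma tensor_central_ind (P : T -> Prop) :
    P 0 -> (forall u v, P u -> P v -> P (u + v)) ->
    (forall z z' c, central z -> central z' -> P (rT (tens z z') c)) ->
  forall t, P t.
Proof.
case: tensor => [[tensD2 [tensD1 tens_bal]] _] P0 PD Pz.
have tensA1 y : additive_map (tens^~ y) by move=> x x'; apply: tensD1.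
have tensA2 x : additive_map (tens x) by move=> y y'; apply: tensD2.
apply: (tensor_ind tensor) => // x y _.
have [s [Zs ->]] := central_span x.
rewrite (big_morph _ (tensA1 y) (additive_map0 (tensA1 y))) big_seq.
apply: big_ind => // -[z b] /Zs /= Zz; rewrite tens_bal //.
have [s' [Zs' ->]] := central_span (lE b y).
rewrite (big_morph _ (tensA2 z) (additive_map0 (tensA2 z))) big_seq.
by apply: big_ind => // -[z' c] /Zs' /= Zz'; rewrite -rT_tens; apply: Pz.
Qed.

Lemma lT_central_tensor a z z' c :
    central z -> central z' ->
  lT a (rT (tens z z') c) = rT (tens z z') (a * c).
Proof.
move=> Zz Zz'; case: bimodT => _ [_ [_ [_ [_ [_ [rTM [_ lrT]]]]]]].
case: tensor => [[_ [_ tens_bal]] _].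
by rewrite lrT lT_tens Zz tens_bal // Zz' -rT_tens rTM.
Qed.

Lemma left_linear_of_central_swap (f : T -> T) :
    additive_map f -> (forall t c, f (rT t c) = rT (f t) c) ->
    (forall z z', central z -> central z' -> f (tens z z') = tens z' z) ->
  forall a t, f (lT a t) = lT a (f t).
Proof.
move=> fA f_rT f_swap a; have lTA := bimodule_left_additive bimodT a.
apply: tensor_central_ind => [|u v fu fv|z z' c Zz Zz'].
- by rewrite !additive_map0.
- by rewrite lTA !fA lTA fu fv.
rewrite lT_central_tensor // f_rT f_swap // -lT_central_tensor //.
by rewrite -f_swap // -f_rT.
Qed.

End CentralTensors.

Theorem proposition6p3
  (R : realType) (A : algType R[i])
  (* Omega^1 = E, Omega^2 = W, T = E (x)_A E, TZ = Z(E) (x)_{Z(A)} A *)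
  (E W T TZ : zmodType)
  (lE : A -> E -> E) (rE : E -> A -> E)
  (lW : A -> W -> W) (rW : W -> A -> W)
  (d0 : A -> E) (d1 : E -> W) (wedge : E -> E -> W)
  (lT : A -> T -> T) (rT : T -> A -> T) (tens : E -> E -> T)
  (wT : T -> W)
  (tz : E -> A -> TZ) (mu : TZ -> E)
  (F : T -> Prop) (Psym : T -> T)
  (* differential calculus *)
  (Hcalc : diff_calculus_le2 lE rE lW rW d0 d1 wedge)
  (* E is a finitely generated projective right A-module *)
  (Hproj : fg_projective_right rE)
  (* T = E (x)_A E as an A-bimodule *)
  (Htens : is_tensor_product (fun _ : A => True) (fun _ : E => True) rE lE tens)
  (HTbimod : is_bimodule lT rT)
  (HlT : forall a x y, lT a (tens x y) = tens (lE a x) y)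
  (HrT : forall x y a, rT (tens x y) a = tens x (rE y a))
  (* the induced product wedge : E (x)_A E -> Omega^2 *)
  (HwT : additive_map wT /\ forall x y, wT (tens x y) = wedge x y)
  (* (1): the multiplication map Z(E) (x)_{Z(A)} A -> E is an isomorphism *)
  (Htz : is_tensor_product (@central_alg A) (central_elt lE rE) rE
           (fun a b : A => a * b) tz)
  (Hmu : additive_map mu /\
         (forall z a, central_elt lE rE z -> mu (tz z a) = rE z a) /\
         bijective mu)
  (* (2): F is a right submodule, E (x)_A E = ker(wedge) (+) F, and
     Q = wedge|_F : F -> Omega^2 is a right A-linear isomorphism *)
  (HF : F 0 /\ (forall s t, F s -> F t -> F (s - t)) /\
        (forall t a, F t -> F (rT t a)))
  (Hdirect : (forall t, exists k f, wT k = 0 /\ F f /\ t = k + f) /\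
             (forall t, wT t = 0 -> F t -> t = 0))
  (HQ : (forall t a, F t -> wT (rT t a) = rW (wT t) a) /\
        (forall s t, F s -> F t -> wT s = wT t -> s = t) /\
        (forall w, exists t, F t /\ wT t = w))
  (* Psym : the idempotent with image ker(wedge) and kernel F *)
  (HPsym : forall t, wT (Psym t) = 0 /\ F (t - Psym t))
  (* (3): sigma (w (x) v) = v (x) w for w, v in Z(E) *)
  (Hsym : forall w v, central_elt lE rE w -> central_elt lE rE v ->
            sigma_of Psym (tens w v) = tens v w) :
  (* (a) sigma and Psym are A-A-bilinear *)
  ((forall s t, sigma_of Psym (s + t) = sigma_of Psym s + sigma_of Psym t) /\
   (forall a t, sigma_of Psym (lT a t) = lT a (sigma_of Psym t)) /\
   (forall t a, sigma_of Psym (rT t a) = rT (sigma_of Psym t) a) /\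
   (forall s t, Psym (s + t) = Psym s + Psym t) /\
   (forall a t, Psym (lT a t) = lT a (Psym t)) /\
   (forall t a, Psym (rT t a) = rT (Psym t) a)) /\
  (* (b) F is a sub-bimodule and Q = wedge|_F : F -> Omega^2 is an
     A-A-bilinear isomorphism *)
  ((forall t a, F t -> F (lT a t)) /\
   (forall s t, F s -> F t -> wT (s + t) = wT s + wT t) /\
   (forall t a, F t -> wT (lT a t) = lW a (wT t)) /\
   (forall t a, F t -> wT (rT t a) = rW (wT t) a) /\
   (forall s t, F s -> F t -> wT s = wT t -> s = t) /\
   (forall w, exists t, F t /\ wT t = w)).
Proof.
case: Hcalc => _ [bimodW [_ [_ [_ [_ [_ [_ [_ [_ [_ [_ [_ [wedge_lE [wedge_rE _]]]]]]]]]]]]]].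
case: HwT => wT_add wT_tens; case: HF => F0 [F_sub F_rT]; case: Hdirect => _ kerF.
have [mu_add [mu_tz [mu_inv _ mu_invK]]] := Hmu.
have rT_add a := bimodule_right_additive HTbimod a.
have lT_add a := bimodule_left_additive HTbimod a.
have wT_rT t a : wT (rT t a) = rW (wT t) a.
  apply: (tensor_additive_ext (wT \o rT^~ a) (rW^~ a \o wT) Htens) => [||x y _].
  - exact: additive_map_comp.
  - exact: additive_map_comp (bimodule_right_additive bimodW a) wT_add.
  by rewrite /= HrT !wT_tens wedge_rE.
have wT_lT t a : wT (lT a t) = lW a (wT t).
  apply: (tensor_additive_ext (wT \o lT a) (lW a \o wT) Htens) => [||x y _].
  - exact: additive_map_comp.
  - exact: additive_map_comp (bimodule_left_additive bimodW a) wT_add.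
  by rewrite /= HlT !wT_tens wedge_lE.
have Psym_rT a : forall t, Psym (rT t a) = rT (Psym t) a.
  apply: (Psym_commute wT_add F_sub HPsym kerF (rT^~ a) (rT_add a)) => [t wt0|t].
    by rewrite wT_rT wt0 (additive_map0 (bimodule_right_additive bimodW a)).
  exact: F_rT.
have Psym_add := Psym_additive wT_add F0 F_sub HPsym kerF.
have sigma_add := sigma_additive wT_add F0 F_sub HPsym kerF.
have sigma_rT a := sigma_commute (rT^~ a) (rT_add a) (Psym_rT a).
have E_span :=
  central_right_span Htz mu_add mu_tz (fun y => ex_intro _ _ (mu_invK y)).
have sigma_lT := left_linear_of_central_swap Htens HTbimod HlT HrT E_span
  (sigma_of Psym) sigma_add (fun t a => sigma_rT a t) Hsym.
have Psym_lT a := Psym_commute_of_sigma (lT a)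
  (bimodule_mulr2n_inj HTbimod) (lT_add a) (sigma_lT a).
have F_lT t a := F_stable_of_Psym_commute wT_add F_sub HPsym kerF
  (lT a) (lT_add a) (Psym_lT a) t.
split.
  by do !split.
split; first exact: F_lT.
split; first by move=> s t _ _; apply: wT_add.
split; first by move=> t a _; apply: wT_lT.
by case: HQ.
Qed.
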